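(* Let $r\ge 3$ and $1\le t\le r-2$ be integers. If $\mathcal F\subseteq X_1\times\dots\times X_r$ is coordinate-wise shifted and is a non-trivial $t$-intersecting family, then the family of projections $\mathcal P(\mathcal F)\subseteq 2^{[r]}$ is non-trivial $t$-intersecting, i.e. $|A\cap B|\ge t$ for all $A,B\in\mathcal P(\mathcal F)$ and $\bigl|\bigcap_{P\in\mathcal P(\mathcal F)}P\bigr|<t$.
   Context: Let $X_\ell=[n_\ell]$ for $1\le \ell\le r$, with $n_\ell\ge2$. For $A,B\in X_1\times\dots\times X_r$, write $A\cap B=\{\ell:A[\ell]=B[\ell]\}$ ($A[\ell]$ the $\ell$-th coordinate). $\mathcal F$ is $t$-intersecting if $|A\cap B|\ge t$ for all $A,B\in\mathcal F$; $\bigcap\mathcal F$ is the set of coordinates $\ell$ on which all members of $\mathcal F$ agree; a $t$-intersecting $\mathcal F$ is non-trivial if $|\bigcap\mathcal F|<t$. The projection of $F$ is $\mathcal P(F)=\{\ell\in[r]:F[\ell]=1\}$ and $\mathcal P(\mathcal F)=\{\mathcal P(F):F\in\mathcal F\}$. For $1\le\ell\le r$ and $1<j\le n_\ell$, the shift $S^{(\ell)}_j$ acts on $F\in\mathcal F$ by: if $F[\ell]=j$ and the sequence $F'$ obtained from $F$ by replacing its $\ell$-th coordinate by $1$ is not in $\mathcal F$, then $S^{(\ell)}_j(F)=F'$; otherwise $S^{(\ell)}_j(F)=F$. Set $S^{(\ell)}_j(\mathcal F)=\{S^{(\ell)}_j(F):F\in\mathcal F\}$. $\mathcal F$ is $\ell$-shifted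 if $S^{(\ell)}_j(\mathcal F)=\mathcal F$ for all $1<j\le n_\ell$, and coordinate-wise shifted if it is $\ell$-shifted for every $1\le\ell\le r$. *)

From mathcomp Require Import all_boot.
Set Implicit Arguments. Unset Strict Implicit. Unset Printing Implicit Defensive.

(* Coordinate l ranges over 'I_r (0-based index for l = 1..r).
   The set X_l = [n_l] = {1,...,n_l} is represented by 'I_(n l) = {0,...,n_l - 1},
   with ordinal value k representing the element k+1.  In particular the
   distinguished value "1" is the ordinal with value 0. *)
Section Product.
Variables (r : nat) (n : 'I_r -> nat).

Definition seqT := {dffun forall l : 'I_r, 'I_(n l)}.

Definition agree (A B : seqT) : {set 'I_r} := [set l | A l == B l].

Definition t_intersecting (F : {set seqT}) (t : nat) : Prop :=
  forall A B, A \in F -> B \in F -> t <= #|agree A B|.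

Definition common_coords (F : {set seqT}) : {set 'I_r} :=
  [set l | [forall A in F, forall B in F, A l == B l]].

Definition nontrivial_t_intersecting (F : {set seqT}) (t : nat) : Prop :=
  t_intersecting F t /\ #|common_coords F| < t.

Definition set_one (l : 'I_r) (A : seqT) : seqT :=
  @finfun _ (fun k => 'I_(n k))
    (fun k => if k == l then insubd (A k) 0 else A k).

Definition shift_elt (l : 'I_r) (j : 'I_(n l)) (F : {set seqT}) (A : seqT) : seqT :=
  if (A l == j) && (set_one l A \notin F) then set_one l A else A.

Definition shift (l : 'I_r) (j : 'I_(n l)) (F : {set seqT}) : {set seqT} :=
  [set shift_elt j F A | A in F].

(* l-shifted: S^(l)_j(F) = F for all 1 < j <= n_l, i.e. ordinal value >= 1 *)
Definition l_shifted (l : 'I_r) (F : {set seqT}) : Prop :=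
  forall j : 'I_(n l), 0 < val j -> shift j F = F.

Definition coord_shifted (F : {set seqT}) : Prop :=
  forall l : 'I_r, l_shifted l F.

Definition proj (A : seqT) : {set 'I_r} := [set l | val (A l) == 0].

Definition projF (F : {set seqT}) : {set {set 'I_r}} := [set proj A | A in F].

End Product.

Definition set_t_intersecting (r : nat) (G : {set {set 'I_r}}) (t : nat) : Prop :=
  forall P Q, P \in G -> Q \in G -> t <= #|P :&: Q|.

Definition set_nontrivial_t_intersecting (r : nat) (G : {set {set 'I_r}}) (t : nat) : Prop :=
  set_t_intersecting G t /\ #|\bigcap_(P in G) P| < t.

From mathcomp Require Import all_boot.

(* A shifted family is closed under replacing any coordinate by 1.  Given A, B
   in F, setting to 1 every coordinate of A outside P(B) yields A' in F whose
   agreement set with B lies inside P(A) :&: P(B), so P(F) is t-intersecting.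
   A coordinate lying in every projection is one where all members equal 1, so
   the intersection of P(F) is contained in that of F. *)

Section Shifting.
Variables (r : nat) (n : 'I_r -> nat).

Lemma val_set_one (l : 'I_r) (A : seqT n) k :
  val (set_one l A k) = if k == l then 0 else val (A k).
Proof.
rewrite /set_one ffunE; case: (k == l) => //.
by rewrite val_insubd (leq_ltn_trans (leq0n _) (ltn_ord (A k))).
Qed.

Lemma set_one_id (l : 'I_r) (A : seqT n) : val (A l) = 0 -> set_one l A = A.
Proof.
move=> Al0; apply/ffunP => k; apply: val_inj; rewrite val_set_one.
by case: eqP => // ->; rewrite Al0.
Qed.

Lemma l_shifted_set_one (F : {set seqT n}) l A :
  l_shifted l F -> A \in F -> set_one l A \in F.
Proof.
move=> shF AF; have [Al0 | Al_neq0] := eqVneq (val (A l)) 0.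
  by rewrite set_one_id.
apply/negPn/negP => A'F.
have : shift_elt (A l) F A \in shift (A l) F by apply: imset_f.
rewrite shF ?lt0n // /shift_elt eqxx A'F /=.
by move/(negP A'F).
Qed.

Definition set_ones (s : seq 'I_r) (A : seqT n) : seqT n :=
  foldr (@set_one r n) A s.

Lemma val_set_ones (s : seq 'I_r) (A : seqT n) k :
  val (set_ones s A k) = if k \in s then 0 else val (A k).
Proof.
elim: s => //= l s IH; rewrite val_set_one in_cons.
by case: (k == l) => //=; apply: IH.
Qed.

Lemma coord_shifted_set_ones (F : {set seqT n}) s A :
  coord_shifted F -> A \in F -> set_ones s A \in F.
Proof. by move=> shF AF; elim: s => //= l s IH; apply: l_shifted_set_one. Qed.

Lemma agree_set_ones_proj (A B : seqT n) :
  agree (set_ones (enum (~: proj B)) A) B \subset proj A :&: proj B.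
Proof.
apply/subsetP => l; rewrite !inE => /eqP /(congr1 val).
rewrite val_set_ones mem_enum !inE.
have [-> /= -> // | Bl_neq0 /= /esym Bl0] := eqVneq (val (B l)) 0.
by case/eqP: Bl_neq0.
Qed.

Lemma t_intersecting_projF (F : {set seqT n}) t :
  coord_shifted F -> t_intersecting F t -> set_t_intersecting (projF F) t.
Proof.
move=> shF tF _ _ /imsetP [A AF ->] /imsetP [B BF ->].
have A'F := @coord_shifted_set_ones F (enum (~: proj B)) A shF AF.
exact: leq_trans (tF _ _ A'F BF) (subset_leq_card (agree_set_ones_proj A B)).
Qed.

Lemma bigcap_projF_sub_common (F : {set seqT n}) :
  \bigcap_(P in projF F) P \subset common_coords F.
Proof.
apply/subsetP => l /bigcapP lP; rewrite inE.
apply/forall_inP => A AF; apply/forall_inP => B BF.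
move: (lP _ (imset_f (@proj r n) AF)) (lP _ (imset_f (@proj r n) BF)).
by rewrite !inE => /eqP Al0 /eqP Bl0; apply/eqP/val_inj; rewrite Al0 Bl0.
Qed.

End Shifting.

Theorem lemma2p1 (r : nat) (n : 'I_r -> nat) (t : nat)
  (hr : 3 <= r) (ht1 : 1 <= t) (ht2 : t <= r - 2)
  (hn : forall l, 2 <= n l)
  (F : {set seqT n}) :
  coord_shifted F -> nontrivial_t_intersecting F t ->
  set_nontrivial_t_intersecting (projF F) t.
Proof.
move=> shF [tF common_lt_t]; split; first exact: t_intersecting_projF.
apply: leq_ltn_trans common_lt_t.
exact/subset_leq_card/bigcap_projF_sub_common.
Qed.
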